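(* Let $1<q<\infty$, $\alpha,\beta\in\mathbb R$, and let $f\in\mathbb W_q^{\alpha,\beta}$ be nonnegative on $[-1,1]$. Then, for every $\delta>0$, \[ \omega_\varphi^1(f,\delta)_{w_{\alpha,\beta},q}\le c\,\omega_\varphi^1(f^q,\delta)_{w_{q\alpha,q\beta},1}^{1/q}, \] with $c$ independent of $f$ and $\delta$.
   Context: For $x\in[-1,1]$, $\varphi(x)=\sqrt{1-x^2}$, $w_{\alpha,\beta}(x)=(1+x)^\alpha(1-x)^\beta$. $\|g\|_{L_q(S)}$ is the $L_q$ norm over $S$; $\mathbb W_q^{\alpha,\beta}=\{f:\|w_{\alpha,\beta}f\|_{L_q[-1,1]}<\infty\}$. $\Delta_h^1(f,x)=f(x+h/2)-f(x-h/2)$ if $x\pm h/2\in[-1,1]$, else $0$; $\overrightarrow\Delta_h^1(f,x)=\Delta_h^1(f,x+h/2)$, $\overleftarrow\Delta_h^1(f,x)=\Delta_h^1(f,x-h/2)$. For a weight $w$ and $1\le q\le\infty$: $\Omega_\varphi^1(f,\delta)_{w,q}=\sup_{0<h\le\delta}\|w(x)\Delta^1_{h\varphi(x)}(f,x)\|_{L_q[-1+2h^2,1-2h^2]}$, $\overrightarrow\Omega_\varphi^1(f,\delta)_{w,q}=\sup_{0<h\le2\delta^2}\|w\overrightarrow\Delta_h^1(f,\cdot)\|_{L_q[-1,-1+2\delta^2]}$, $\overleftarrow\Omega_\varphi^1(f,\delta)_{w,q}=\sup_{0<h\le2\delta^2}\|w\overleftarrow\Delta_h^1(f,\cdot)\|_{L_q[1-2\delta^2,1]}$,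 and $\omega_\varphi^1=\Omega_\varphi^1+\overrightarrow\Omega_\varphi^1+\overleftarrow\Omega_\varphi^1$. *)

From HB Require Import structures.
From mathcomp Require Import all_boot all_order all_algebra.
From mathcomp Require Import all_classical all_reals all_analysis.
Set Implicit Arguments. Unset Strict Implicit. Unset Printing Implicit Defensive.
Import Order.TTheory GRing.Theory Num.Theory.
Local Open Scope classical_set_scope.
Local Open Scope ring_scope.

Section Defs.
Variable R : realType.

Definition phi (x : R) : R := Num.sqrt (1 - x ^+ 2).

Definition wab (a b : R) (x : R) : R := powR (1 + x) a * powR (1 - x) b.

Definition Delta1 (f : R -> R) (h x : R) : R :=
  if (-1 <= x - h / 2) && (x + h / 2 <= 1) then f (x + h / 2) - f (x - h / 2)
  else 0.
Definition fDelta1 (f : R -> R) (h x : R) : R := Delta1 f h (x + h / 2).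
Definition bDelta1 (f : R -> R) (h x : R) : R := Delta1 f h (x - h / 2).

Definition Lnorm_on (p : R) (S : set R) (g : R -> R) : \bar R :=
  ((\int[@lebesgue_measure R]_(x in S) ((powR `|g x| p)%:E)) `^ p^-1)%E.

Definition Omega_phi (f : R -> R) (delta : R) (w : R -> R) (p : R) : \bar R :=
  ereal_sup [set y | exists h : R, [/\ 0 < h, h <= delta &
    y = Lnorm_on p `[-1 + 2 * h ^+ 2, 1 - 2 * h ^+ 2]
          (fun x => w x * Delta1 f (h * phi x) x)]].

Definition fOmega_phi (f : R -> R) (delta : R) (w : R -> R) (p : R) : \bar R :=
  ereal_sup [set y | exists h : R, [/\ 0 < h, h <= 2 * delta ^+ 2 &
    y = Lnorm_on p `[-1, -1 + 2 * delta ^+ 2] (fun x => w x * fDelta1 f h x)]].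

Definition bOmega_phi (f : R -> R) (delta : R) (w : R -> R) (p : R) : \bar R :=
  ereal_sup [set y | exists h : R, [/\ 0 < h, h <= 2 * delta ^+ 2 &
    y = Lnorm_on p `[1 - 2 * delta ^+ 2, 1] (fun x => w x * bDelta1 f h x)]].

Definition omega_phi (f : R -> R) (delta : R) (w : R -> R) (p : R) : \bar R :=
  (Omega_phi f delta w p + fOmega_phi f delta w p + bOmega_phi f delta w p)%E.

End Defs.

From HB Require Import structures.
From mathcomp Require Import all_boot all_order all_algebra.
From mathcomp Require Import all_classical all_reals all_analysis.
From mathcomp Require Import lra.
Import Order.TTheory GRing.Theory Num.Theory.
Local Open Scope classical_set_scope.
Local Open Scope ring_scope.

(* For q >= 1 and 0 <= v <= u, superadditivity of t |-> t^q gives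
   (u - v)^q + v^q <= u^q, i.e. |u - v|^q <= |u^q - v^q| for all u, v >= 0.
   Multiplying by w_{a,b}^q = w_{qa,qb} and integrating bounds each
   L_q-difference of f by the q-th root of the corresponding L_1-difference
   of f^q; passing to the suprema, each of the three parts of omega is
   dominated by (omega_phi(f^q))^(1/q), so c = 3 works. *)

Lemma powR_subr1 (R : realType) (q u : R) : 1 <= q -> 0 <= u ->
  powR u q = powR u (q - 1) * u.
Proof.
move=> q1 u0; rewrite -[in LHS](subrK 1 q) [in LHS]powRD ?powRr1 //.
by rewrite subrK; apply/implyP => /eqP q0; move: q1; rewrite q0 ler10.
Qed.

Lemma powR_superadditive (R : realType) (q x y : R) : 1 <= q -> 0 <= x -> 0 <= y ->
  powR x q + powR y q <= powR (x + y) q.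
Proof.
move=> q1 x0 y0; have xy0 : 0 <= x + y by rewrite addr_ge0.
rewrite !(@powR_subr1 _ q _ q1) // mulrDr.
have q10 : 0 <= q - 1 by rewrite subr_ge0.
by apply: lerD; apply: ler_wpM2r => //; apply: ge0_ler_powR;
  rewrite ?nnegrE ?lerDl ?lerDr.
Qed.

Lemma powR_dist_le (R : realType) (q u v : R) : 1 <= q -> 0 <= u -> 0 <= v ->
  powR `|u - v| q <= `|powR u q - powR v q|.
Proof.
move=> q1 u0 v0.
wlog vu : u v u0 v0 / v <= u.
  move=> le_uv; case: (leP v u) => [/le_uv|/ltW uv]; first exact.
  by rewrite distrC [X in _ <= X]distrC; apply: le_uv.
have q0 : 0 <= q by rewrite (le_trans _ q1).
rewrite ger0_norm ?subr_ge0 // ger0_norm ?subr_ge0; last first.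
  by apply: ge0_ler_powR; rewrite ?nnegrE.
rewrite lerBrDr -{2}(subrK v u).
by apply: powR_superadditive; rewrite ?subr_ge0.
Qed.

Lemma wab_ge0 (R : realType) (a b x : R) : 0 <= wab a b x.
Proof. by rewrite /wab mulr_ge0 ?powR_ge0. Qed.

Lemma powR_wab (R : realType) (q a b x : R) :
  powR (wab a b x) q = wab (q * a) (q * b) x.
Proof.
by rewrite /wab powRM ?powR_ge0 // -!powRrM [a * q]mulrC [b * q]mulrC.
Qed.

Lemma powR_wab_Delta1_le (R : realType) (q a b : R) (f : R -> R) (h z x : R) :
  1 <= q -> 0 <= h -> (forall y, -1 <= y <= 1 -> 0 <= f y) ->
  powR `|wab a b z * Delta1 f h x| q <=
  powR `|wab (q * a) (q * b) z * Delta1 (fun y => powR (f y) q) h x| 1.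
Proof.
move=> q1 h0 f_ge0; rewrite powRr1 //.
rewrite /Delta1; case: ifP => [/andP[xl xr]|_]; last first.
  by rewrite !mulr0 normr0 powR0 //; apply/eqP => q0; move: q1; rewrite q0 ler10.
rewrite (normrM (wab a b z)) (normrM (wab (q * a) _ z)) !(ger0_norm (wab_ge0 _ _ _ _)).
rewrite powRM ?wab_ge0 // powR_wab.
by apply/ler_wpM2l/powR_dist_le; rewrite ?wab_ge0 //; apply: f_ge0; apply/andP; split; lra.
Qed.

(* Nonnegative integrals are suprema over simple minorants, so they are
   monotone without any measurability assumption. *)
Lemma ge0_le_integral_nonmeasurable (R : realType) (S : set R) (g1 g2 : R -> \bar R) :
  (forall x, S x -> (0 <= g1 x)%E) -> (forall x, S x -> (g1 x <= g2 x)%E) ->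
  (\int[@lebesgue_measure R]_(x in S) g1 x <=
   \int[@lebesgue_measure R]_(x in S) g2 x)%E.
Proof.
move=> g1_ge0 g12.
have g2_ge0 x : S x -> (0 <= g2 x)%E by move=> Sx; exact: le_trans (g1_ge0 _ Sx) (g12 _ Sx).
rewrite !ge0_integralE //; apply: ereal_sup_le => y [h le_h <-]; exists h => //= x.
apply: le_trans (le_h x) _.
by rewrite /patch; case: ifP => // /set_mem /g12.
Qed.

Lemma Lnorm_on_le_poweR (R : realType) (q : R) (S : set R) (g1 g2 : R -> R) :
  1 <= q -> (forall x, S x -> powR `|g1 x| q <= powR `|g2 x| 1) ->
  (Lnorm_on q S g1 <= Lnorm_on 1 S g2 `^ q^-1)%E.
Proof.
move=> q1 le_g; rewrite /Lnorm_on invr1.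
have int_ge0 (r : R) (g : R -> R) :
    (0 <= \int[@lebesgue_measure R]_(x in S) (powR `|g x| r)%:E)%E.
  by apply: integral_ge0 => x _; rewrite lee_fin powR_ge0.
rewrite poweRe1 //; apply: gt0_ler_poweR; rewrite ?in_itv /= ?int_ge0 ?leey //.
  by rewrite invr_ge0 (le_trans _ q1).
apply: ge0_le_integral_nonmeasurable => x Sx; first by rewrite lee_fin powR_ge0.
by rewrite lee_fin le_g.
Qed.

Lemma ereal_sup_le_poweR (R : realType) (r : R) (P1 P2 : R -> Prop) (F G : R -> \bar R) :
  0 <= r -> (forall h, P1 h -> P2 h -> (F h <= G h `^ r)%E) ->
  (forall h, (0 <= G h)%E) ->
  (ereal_sup [set y | exists h, [/\ P1 h, P2 h & y = F h]] <=
   ereal_sup [set y | exists h, [/\ P1 h, P2 h & y = G h]] `^ r)%E.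
Proof.
move=> r0 le_FG G_ge0; apply: ge_ereal_sup => y [h [p1 p2 ->]].
apply: le_trans (le_FG h p1 p2) _.
have le_Gsup : (G h <= ereal_sup [set y | exists h, [/\ P1 h, P2 h & y = G h]])%E.
  by apply: ereal_sup_ubound; exists h.
by apply: gt0_ler_poweR; rewrite // ?in_itv /= ?leey ?G_ge0 ?(le_trans (G_ge0 h)).
Qed.

Lemma ereal_sup_ge0 (R : realType) (P1 P2 : R -> Prop) (G : R -> \bar R) (h0 : R) :
  P1 h0 -> P2 h0 -> (forall h, (0 <= G h)%E) ->
  (0 <= ereal_sup [set y | exists h, [/\ P1 h, P2 h & y = G h]])%E.
Proof.
move=> p1 p2 G_ge0; apply: le_trans (G_ge0 h0) _.
by apply: ereal_sup_ubound; exists h0.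
Qed.

Lemma sum3_le_poweR (R : realType) (r : R) (x1 x2 x3 y1 y2 y3 : \bar R) : 0 <= r ->
  (0 <= x1)%E -> (0 <= x2)%E -> (0 <= x3)%E ->
  (y1 <= x1 `^ r)%E -> (y2 <= x2 `^ r)%E -> (y3 <= x3 `^ r)%E ->
  (y1 + y2 + y3 <= 3%:E * (x1 + x2 + x3) `^ r)%E.
Proof.
move=> r0 x10 x20 x30 le1 le2 le3.
set s := (x1 + x2 + x3)%E; have s0 : (0 <= s)%E by rewrite !adde_ge0.
have le_pow x : (0 <= x)%E -> (x <= s)%E -> (x `^ r <= s `^ r)%E.
  by move=> x0 xs; apply: gt0_ler_poweR; rewrite // ?in_itv /= ?leey ?x0 ?s0.
have three (t : \bar R) : (0 <= t)%E -> (t + t + t = 3%:E * t)%E.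
  case: t => [t| |] //= t0; last by rewrite mulry gtr0_sg // mul1e.
  by rewrite -!EFinD -EFinM; congr EFin; lra.
rewrite -three ?poweR_ge0 //; apply: leeD; first apply: leeD.
- by apply: le_trans le1 (le_pow _ _ _); rewrite // /s -addeA leeDl ?adde_ge0.
- by apply: le_trans le2 (le_pow _ _ _); rewrite // /s (le_trans (leeDr _ x10)) ?leeDl.
- by apply: le_trans le3 (le_pow _ _ _); rewrite // /s leeDr ?adde_ge0.
Qed.

Section ModulusComparison.
Variables (R : realType) (q a b : R) (f : R -> R) (delta : R).
Hypotheses (q1 : 1 <= q) (f_ge0 : forall y : R, -1 <= y <= 1 -> 0 <= f y).

Let fq := fun x => powR (f x) q.

Let qV_ge0 : 0 <= q^-1. Proof. by rewrite invr_ge0 (le_trans _ q1). Qed.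

Lemma Omega_phi_le_poweR : (Omega_phi f delta (wab a b) q <=
  Omega_phi fq delta (wab (q * a) (q * b)) 1 `^ q^-1)%E.
Proof.
apply: ereal_sup_le_poweR => // [h h0 _|h]; last exact: poweR_ge0.
apply: Lnorm_on_le_poweR => // x _; apply: powR_wab_Delta1_le => //.
by apply: mulr_ge0; [exact: ltW | exact: sqrtr_ge0].
Qed.

Lemma fOmega_phi_le_poweR : (fOmega_phi f delta (wab a b) q <=
  fOmega_phi fq delta (wab (q * a) (q * b)) 1 `^ q^-1)%E.
Proof.
apply: ereal_sup_le_poweR => // [h h0 _|h]; last exact: poweR_ge0.
by apply: Lnorm_on_le_poweR => // x _; apply: powR_wab_Delta1_le => //; apply: ltW.
Qed.

Lemma bOmega_phi_le_poweR : (bOmega_phi f delta (wab a b) q <=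
  bOmega_phi fq delta (wab (q * a) (q * b)) 1 `^ q^-1)%E.
Proof.
apply: ereal_sup_le_poweR => // [h h0 _|h]; last exact: poweR_ge0.
by apply: Lnorm_on_le_poweR => // x _; apply: powR_wab_Delta1_le => //; apply: ltW.
Qed.

End ModulusComparison.

Theorem lemma4p3 (R : realType) (q a b : R) :
  1 < q ->
  exists c : R, 0 < c /\
    forall f : R -> R,
      measurable_fun `[(-1 : R), 1] f ->
      (forall x : R, -1 <= x <= 1 -> 0 <= f x) ->
      (Lnorm_on q `[(-1)%R, 1%R] (fun x => (wab a b x * f x)%R) < +oo)%E ->
      forall delta : R, 0 < delta ->
        (omega_phi f delta (wab a b) q <=
         c%:E * (omega_phi (fun x => powR (f x) q) delta (wab (q * a) (q * b)) 1)
                  `^ q^-1)%E.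
Proof.
move=> /ltW q1; exists 3; split => // f _ f_ge0 _ delta delta0.
have dd0 : 0 < 2 * delta ^+ 2 by rewrite mulr_gt0 // exprn_gt0.
apply: sum3_le_poweR.
- by rewrite invr_ge0 (le_trans _ q1).
- by apply: (@ereal_sup_ge0 _ _ _ _ delta) => // h; exact: poweR_ge0.
- by apply: (@ereal_sup_ge0 _ _ _ _ (2 * delta ^+ 2)) => // h; exact: poweR_ge0.
- by apply: (@ereal_sup_ge0 _ _ _ _ (2 * delta ^+ 2)) => // h; exact: poweR_ge0.
- exact: Omega_phi_le_poweR.
- exact: fOmega_phi_le_poweR.
- exact: bOmega_phi_le_poweR.
Qed.
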